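(* Let $(X,G)$ be topologically transitive, let $X_0$ be a dense $G$-invariant subset of $X_t$, and let $\lambda$ be a $G$-invariant Borel probability measure on $X$ with $\lambda(X_0)=1$ ($X_0$ assumed $\lambda$-measurable). Then $S^{eq}_0\subseteq\bigcap_{N\in\mathcal N}K_0(N)$.
   Context: $G$ is a group acting by homeomorphisms $x\mapsto gx$ on a compact metrizable space $X$, topologically transitive; $X_t:=\{x\in X:\overline{Gx}=X\}$. $\mathcal N$ is the family of all closed $G$-invariant (for the diagonal action) subsets of $X^2$; for $N\in\mathcal N$, $N_x:=\{y:(x,y)\in N\}$ and $d_N(x,x'):=\lambda(N_x\triangle N_{x'})$; $K_0(N):=\{(x,x')\in X_0^2:d_N(x,x')=0\}$. For a continuous $G$-equivariant map $\pi:X_0\to Y$ into a compact metrizable minimal equicontinuous system $(Y,G)$, $S^\pi_0:=\{(x,x')\in X_0^2:\pi(x)=\pi(x')\}$, and $S^{eq}_0:=\bigcap_\pi S^\pi_0$ over all such $Y,\pi$. *)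

From HB Require Import structures.
From mathcomp Require Import ssreflect ssrfun ssrbool eqtype choice monoid.
From mathcomp Require Import ssralg ssrnum boolp classical_sets reals ereal topology normedtype.
From mathcomp Require Import measure.

Set Implicit Arguments.
Unset Strict Implicit.
Unset Printing Implicit Defensive.

Local Open Scope classical_set_scope.
Local Open Scope ring_scope.

(* An action of the (abstract, possibly infinite) group G on T by homeomorphisms:
   a 1 = id, a (g*h) = a g \o a h, each a g continuous (its inverse a g^-1 is then
   also continuous, so each a g is a homeomorphism). *)
Definition homeo_action (G : groupType) (T : topologicalType) (a : G -> T -> T) :=
  [/\ (forall x, a (@monoid.one G) x = x),
      (forall g h x, a (monoid.mul g h) x = a g (a h x)) &
      (forall g, continuous (a g))].

Definition orbit (G : groupType) (T : Type) (a : G -> T -> T) (x : T) : set T :=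
  [set a g x | g in [set: G]].

Definition top_transitive (G : groupType) (T : topologicalType) (a : G -> T -> T) :=
  forall U V : set T, open U -> open V -> U !=set0 -> V !=set0 ->
    exists g : G, (a g @` U) `&` V !=set0.

Definition transitive_points (G : groupType) (T : topologicalType) (a : G -> T -> T)
  : set T := [set x | closure (orbit a x) = [set: T]].

Definition G_invariant_set (G : groupType) (T : Type) (a : G -> T -> T) (A : set T) :=
  forall g x, A x -> A (a g x).

Definition minimal_system (G : groupType) (T : topologicalType) (a : G -> T -> T) :=
  forall y : T, closure (orbit a y) = [set: T].

Definition equicontinuous_system (R : realType) (G : groupType)
  (Y : pseudoMetricType R) (b : G -> Y -> Y) :=
  forall eps : R, 0 < eps -> exists2 del : R, 0 < del &
    forall (g : G) (y y' : Y), ball y del y' -> ball (b g y) eps (b g y').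

Definition borel_type (T : ptopologicalType) := g_sigma_algebraType (@open T).

Definition in_calN (G : groupType) (X : topologicalType) (a : G -> X -> X)
  (N : set (X * X)) :=
  closed N /\ forall g x y, N (x, y) -> N (a g x, a g y).

Definition section (X : Type) (N : set (X * X)) (x : X) : set X := [set y | N (x, y)].

Definition symdiff (T : Type) (A B : set T) : set T := (A `\` B) `|` (B `\` A).

Definition d_N (R : realType) (X : ptopologicalType)
  (lam : set (borel_type X) -> \bar R) (N : set (X * X)) (x x' : X) : \bar R :=
  lam (symdiff (section N x) (section N x')).

Definition K0 (R : realType) (X : ptopologicalType)
  (lam : set (borel_type X) -> \bar R) (X0 : set X) (N : set (X * X)) : set (X * X) :=
  [set p | X0 p.1 /\ X0 p.2 /\ d_N lam N p.1 p.2 = 0%:E].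

(* S^π_0 : here π is given as a total function X -> Y, of which only the
   restriction to X0 matters (continuity and equivariance are only required on X0) *)
Definition S0pi (X Y : Type) (X0 : set X) (pi : X -> Y) : set (X * X) :=
  [set p | X0 p.1 /\ X0 p.2 /\ pi p.1 = pi p.2].

Definition S0eq (R : realType) (G : groupType) (X : topologicalType)
  (a : G -> X -> X) (X0 : set X) : set (X * X) :=
  [set p | X0 p.1 /\ X0 p.2 /\
    forall (Y : pseudoMetricType R) (b : G -> Y -> Y) (pi : X -> Y),
      hausdorff_space Y -> compact [set: Y] ->
      homeo_action b -> minimal_system b -> equicontinuous_system b ->
      {within X0, continuous pi} ->
      (forall g x, X0 x -> pi (a g x) = b g (pi x)) ->
      S0pi X0 pi p].

(* For N in 𝒩 the quantity d_N is a G-invariant pseudometric on X0.  Since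
   λ is invariant and every point of X0 has a dense orbit, λ(N_x) does not
   depend on x in X0, so the upper semicontinuity of x' ↦ λ(N_x' \ N_x)
   (N is closed) makes d_N continuous on X0.  A support point of λ in X0 and
   a maximal family of disjoint translates of a small ball around it show
   that d_N is totally bounded on X0.  The uniform closure of the functions
   d_N(x, ·) (x in X0) is then a compact metric space on which G acts
   isometrically and minimally, and x ↦ d_N(x, ·) is a continuous equivariant
   map from X0 into it.  Points of S^eq_0 have the same image under this
   map, hence d_N(x, x') = d_N(x', x') = 0. *)

From HB Require Import structures.
From mathcomp Require Import ssreflect ssrfun ssrbool eqtype ssrnat seq choice bigop order.
From mathcomp Require Import ssralg ssrnum archimedean monoid.
From mathcomp Require Import boolp classical_sets reals ereal topology normedtype.
From mathcomp Require Import sequences measure lra.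
Import Order.TTheory GRing.Theory Num.Theory archimedean.Num.Theory.
Import numFieldNormedType.Exports.

Set Implicit Arguments.
Unset Strict Implicit.
Unset Printing Implicit Defensive.

Local Open Scope classical_set_scope.
Local Open Scope ring_scope.

Lemma ultra_bigsetU (T : Type) (I : eqType) (F : set_system T) (A : I -> set T)
    (s : seq I) :
  UltraFilter F -> F (\big[setU/set0]_(i <- s) A i) -> exists2 i, i \in s & F (A i).
Proof.
move=> UF; have PF := @ultra_proper _ F UF; elim: s => [|i s IHs].
  by rewrite big_nil => /filter_not_empty.
rewrite big_cons => FAs; have [FAi|FnAi] := in_ultra_setVsetC (A i) UF.
  by exists i => //; rewrite mem_head.
have [|j js FAj] := IHs; last by exists j => //; rewrite inE js orbT.
by apply: filterS (filterI FAs FnAi) => f [[]].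
Qed.

Lemma bigsetU_seqP (I : eqType) (T : Type) (s : seq I) (F : I -> set T) z :
  (\big[setU/set0]_(i <- s) F i) z -> exists2 i, i \in s & F i z.
Proof.
elim: s => [|i s IHs]; first by rewrite big_nil.
rewrite big_cons => -[Fiz|/IHs [j js Fjz]]; first by exists i; rewrite ?mem_head.
by exists j; rewrite // inE js orbT.
Qed.

Lemma closed_section (T : topologicalType) (N : set (T * T)) x :
  closed N -> closed (section N x).
Proof.
move=> cN; apply: (@preimage_closed _ _ (pair x)) => // y _.
by apply: cvg_pair; [exact: cvg_cst | exact: cvg_id].
Qed.

Lemma open_borel (T : ptopologicalType) (A : set T) :
  open A -> measurable (A : set (borel_type T)).
Proof. exact: sub_sigma_algebra. Qed.

Lemma closed_borel (T : ptopologicalType) (A : set T) :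
  closed A -> measurable (A : set (borel_type T)).
Proof.
move=> cA; rewrite -[A]setCK; apply: measurableC.
by apply: open_borel; exact: closed_openC.
Qed.

Lemma symdiff_measurable d (T : measurableType d) (A B : set T) :
  measurable A -> measurable B -> measurable (symdiff A B).
Proof. by move=> mA mB; apply: measurableU; exact: measurableD. Qed.

Lemma transitive_point_visits (G : groupType) (T : topologicalType) (a : G -> T -> T)
    x y (B : set T) :
  transitive_points a x -> nbhs (y : T) B -> exists g, B (a g x).
Proof.
rewrite /transitive_points /= => dense_orbit yB.
have : closure (orbit a x) y by rewrite dense_orbit.
by move=> /(_ _ yB) [_ [[g _ <-] Bgx]]; exists g.
Qed.

Lemma exists_natSinv_lt (R : archiRealFieldType) (e : R) :
  0 < e -> exists k : nat, k.+1%:R^-1 < e.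
Proof.
move=> e0; have [k _ ke] := near_infty_natSinv_lt (PosNum e0).
by exists k; exact: ke k (leqnn k).
Qed.

Section GroupActionLaws.
Variables (G : groupType) (T : Type) (a : G -> T -> T).
Hypothesis act1 : forall x, a monoid.one x = x.
Hypothesis actM : forall g h x, a (monoid.mul g h) x = a g (a h x).

Lemma actK g : cancel (a g) (a (monoid.inv g)).
Proof. by move=> x; rewrite -actM monoid.mulVg act1. Qed.

Lemma actVK g : cancel (a (monoid.inv g)) (a g).
Proof. by move=> x; rewrite -actM monoid.mulgV act1. Qed.

Lemma G_invariant_setV (A : set T) : G_invariant_set a A ->
  forall g x, A (a g x) -> A x.
Proof. by move=> invA g x /(invA (monoid.inv g)); rewrite actK. Qed.

End GroupActionLaws.

(** * The uniform hull of a pseudometric *)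

Section PseudometricHull.
Variables (R : realType) (X : choiceType) (X0 : set X) (rho : X -> X -> R).

(* The uniform closure of the functions [rho x] (x in X0) restricted to X0;
   extending by 0 off X0 makes equality of hull points extensional. *)
Definition in_rho_hull (f : X -> R) :=
  (forall y, ~ X0 y -> f y = 0) /\
  forall e, 0 < e -> exists2 x, X0 x & forall y, X0 y -> `|f y - rho x y| <= e.

Definition rho_hull := {f : X -> R | in_rho_hull f}.
HB.instance Definition _ := gen_eqMixin rho_hull.
HB.instance Definition _ := gen_choiceMixin rho_hull.

Definition hull_ball (f : rho_hull) (e : R) (g : rho_hull) :=
  exists2 d, d < e & forall y, `|sval f y - sval g y| <= d.

Lemma hull_ball_center f e : 0 < e -> hull_ball f e f.
Proof. by move=> e0; exists 0 => // y; rewrite subrr normr0. Qed.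

Lemma hull_ball_sym f g e : hull_ball f e g -> hull_ball g e f.
Proof. by move=> [d de fg]; exists d => // y; rewrite distrC. Qed.

Lemma hull_ball_triangle f g h e1 e2 :
  hull_ball f e1 g -> hull_ball g e2 h -> hull_ball f (e1 + e2) h.
Proof.
move=> [d1 d1e fg] [d2 d2e gh]; exists (d1 + d2); first exact: ltrD.
by move=> y; apply: le_trans (ler_distD (sval g y) _ _) _; exact: lerD.
Qed.

HB.instance Definition _ := hasNbhs.Build rho_hull (nbhs_ (entourage_ hull_ball)).
HB.instance Definition _ := @Nbhs_isPseudoMetric.Build R rho_hull
  (entourage_ hull_ball) erefl hull_ball hull_ball_center hull_ball_sym
  hull_ball_triangle erefl.

Lemma hull_ext (f g : rho_hull) : sval f =1 sval g -> f = g.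
Proof.
case: f g => f Pf [g Pg] /= /funext fg; subst g.
by congr exist; exact: Prop_irrelevance.
Qed.

Lemma hull_hausdorff : hausdorff_space rho_hull.
Proof.
move=> f g fg; apply: hull_ext => y; apply: contrapT => fgy.
have e0 : 0 < `|sval f y - sval g y| / 2.
  by rewrite divr_gt0 // normr_gt0 subr_eq0; apply/eqP.
have [h [[d1 d1e fh] [d2 d2e gh]]] :=
  fg _ _ (nbhsx_ballx f _ e0) (nbhsx_ballx g _ e0).
have := ler_distD (sval h y) (sval f y) (sval g y).
have := fh y; have := gh y; rewrite [`|sval g y - _|]distrC.
move: d1e d2e; move: (`|sval f y - sval g y|) => t; lra.
Qed.

Definition rho_on x y := if pselect (X0 y) then rho x y else 0.

Lemma rho_onE x y : X0 y -> rho_on x y = rho x y.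
Proof. by rewrite /rho_on; case: pselect. Qed.

Lemma rho_on_out x y : ~ X0 y -> rho_on x y = 0.
Proof. by rewrite /rho_on; case: pselect. Qed.

Lemma in_rho_hull_rho_on x : X0 x -> in_rho_hull (rho_on x).
Proof.
move=> Xx; split => [y|e e0]; first exact: rho_on_out.
by exists x => // y Xy; rewrite rho_onE // subrr normr0 ltW.
Qed.

Lemma hull_close_rho_on (f : rho_hull) e : 0 < e ->
  exists2 x, X0 x & forall y, `|sval f y - rho_on x y| <= e.
Proof.
case: f => f [f0 fa] /= e0; have [x Xx fx] := fa e e0; exists x => // y.
have [Xy|nXy] := pselect (X0 y); first by rewrite rho_onE // fx.
by rewrite f0 // rho_on_out // subrr normr0 ltW.
Qed.

Hypothesis rhoC : forall x y, rho x y = rho y x.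
Hypothesis rho_triangle : forall x y z, rho x z <= rho x y + rho y z.
Hypothesis rho_totally_bounded : forall e, 0 < e ->
  exists s : seq X, forall x, X0 x -> exists2 q, q \in s & rho x q <= e.

Lemma rho_lipschitz u v y : `|rho u y - rho v y| <= rho u v.
Proof.
have := rho_triangle u v y; have := rho_triangle v u y.
rewrite (rhoC v u) ler_norml => h1 h2; apply/andP; split; lra.
Qed.

Lemma hull_finite_net e : 0 < e -> exists s : seq X,
  forall f : rho_hull, exists2 q, q \in s & forall y, `|sval f y - rho_on q y| <= e.
Proof.
move=> e0; have e20 : 0 < e / 2 by rewrite divr_gt0.
have [s net] := rho_totally_bounded e20; exists s => f.
have [x Xx fx] := hull_close_rho_on f e20; have [q qs xq] := net x Xx.
exists q => // y; have [Xy|nXy] := pselect (X0 y); last first.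
  by have := fx y; rewrite !rho_on_out // => /le_trans; apply; lra.
have := ler_distD (rho_on x y) (sval f y) (rho_on q y).
have := fx y; have := rho_lipschitz x q y; rewrite !rho_onE //.
move: (`|sval f y - rho q y|) (`|sval f y - rho x y|) (`|rho x y - rho q y|).
by move=> t u v; lra.
Qed.

Definition hull_diam_le (A : set rho_hull) e :=
  forall f g, A f -> A g -> forall y, `|sval f y - sval g y| <= e.

Definition hull_eval y (f : rho_hull) := sval f y.

Section UltraLimit.
Variable F : set_system rho_hull.
Hypothesis UF : UltraFilter F.
#[local] Instance ultra_proper_filter : ProperFilter F := @ultra_proper _ F UF.

Lemma ultra_small_set e : 0 < e -> exists2 A, F A & hull_diam_le A e.
Proof.
move=> e0; have e20 : 0 < e / 2 by rewrite divr_gt0.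
have [s net] := hull_finite_net e20.
pose B q := [set f : rho_hull | forall y, `|sval f y - rho_on q y| <= e / 2].
have [|q _ FBq] := @ultra_bigsetU _ _ F B s UF.
  apply: filterS filterT => f _; have [q qs fq] := net f.
  by rewrite (big_rem _ qs); left.
exists (B q) => // f g Bf Bg y.
have := ler_distD (rho_on q y) (sval f y) (sval g y).
have := Bf y; have := Bg y; rewrite [`|sval g y - _|]distrC.
move: (`|sval f y - sval g y|) => t; lra.
Qed.

Definition ultra_limit y := lim (hull_eval y @ F).

Lemma ultra_limit_cvg y : hull_eval y @ F --> ultra_limit y.
Proof.
apply: cauchy_cvg; apply: cauchy_exP => e e0.
have e20 : 0 < e / 2 by rewrite divr_gt0.
have [A FA smallA] := ultra_small_set e20; have [f Af] := filter_ex FA.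
exists (sval f y).
suff : F [set g | ball (sval f y) e (hull_eval y g)] by [].
apply: filterS FA => g Ag; rewrite /ball /=.
by apply: le_lt_trans (smallA _ _ Af Ag y) _; lra.
Qed.

Lemma ultra_limit_close A e f : F A -> hull_diam_le A e -> A f ->
  forall y, `|sval f y - ultra_limit y| <= e.
Proof.
move=> FA smallA Af y; apply/ler_addgt0Pr => d d0.
have Fd : \forall g \near F, `|ultra_limit y - hull_eval y g| < d.
  exact: cvgr_dist_lt (@ultra_limit_cvg y) d d0.
have [g [Ag gd]] := filter_ex (filterI FA Fd).
have := ler_distD (sval g y) (sval f y) (ultra_limit y).
have := smallA _ _ Af Ag y; rewrite /hull_eval distrC in gd.
move: (`|sval f y - ultra_limit y|) => t; lra.
Qed.

Lemma in_rho_hull_ultra_limit : in_rho_hull ultra_limit.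
Proof.
split=> [y nXy|e e0].
  apply/normr0_eq0/eqP; rewrite eq_le normr_ge0 andbT.
  apply/ler_addgt0Pr => e e0; rewrite add0r.
  have [A FA smallA] := ultra_small_set e0; have [f Af] := filter_ex FA.
  have := ultra_limit_close FA smallA Af y.
  by rewrite (proj1 (svalP f)) // sub0r normrN.
have e20 : 0 < e / 2 by rewrite divr_gt0.
have [A FA smallA] := ultra_small_set e20; have [f Af] := filter_ex FA.
have [x Xx fx] := (proj2 (svalP f)) _ e20; exists x => // y Xy.
have := ler_distD (sval f y) (ultra_limit y) (rho x y).
have := ultra_limit_close FA smallA Af y; have := fx y Xy.
rewrite [`|ultra_limit y - sval f y|]distrC.
move: (`|ultra_limit y - rho x y|) => t; lra.
Qed.

Lemma ultra_hull_cvg : F --> (exist _ ultra_limit in_rho_hull_ultra_limit : rho_hull).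
Proof.
apply/fcvg_ballP => e e0; have e20 : 0 < e / 2 by rewrite divr_gt0.
have [A FA smallA] := ultra_small_set e20.
apply: filterS (FA) => f Af; exists (e / 2); first lra.
by move=> y; rewrite /= distrC; exact: ultra_limit_close FA smallA Af y.
Qed.

End UltraLimit.

Lemma hull_compact : compact [set: rho_hull].
Proof.
rewrite compact_ultra => F UF _.
exists (exist _ _ (in_rho_hull_ultra_limit UF)); split => //.
exact: ultra_hull_cvg.
Qed.

End PseudometricHull.

Section HullDynamics.
Variables (R : realType) (G : groupType) (X : topologicalType).
Variables (a : G -> X -> X) (X0 : set X) (rho : X -> X -> R).
Hypothesis act1 : forall x, a monoid.one x = x.
Hypothesis actM : forall g h x, a (monoid.mul g h) x = a g (a h x).
Hypothesis X0_invariant : G_invariant_set a X0.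
Hypothesis rhoxx : forall x, rho x x = 0.
Hypothesis rhoC : forall x y, rho x y = rho y x.
Hypothesis rho_triangle : forall x y z, rho x z <= rho x y + rho y z.
Hypothesis rho_totally_bounded : forall e, 0 < e ->
  exists s : seq X, forall x, X0 x -> exists2 q, q \in s & rho x q <= e.
Hypothesis rho_invariant : forall g x y, rho (a g x) (a g y) = rho x y.
Hypothesis rho_continuous : forall x, X0 x -> forall e, 0 < e ->
  \forall y \near x, X0 y -> rho x y <= e.
Hypothesis rho_orbit_dense : forall x x', X0 x -> X0 x' -> forall e, 0 < e ->
  exists g, rho x' (a g x) < e.

Let Y := rho_hull X0 rho.

Lemma rho_ge0 x y : 0 <= rho x y.
Proof. by have := rho_triangle x y x; rewrite rhoxx rhoC; lra. Qed.

Definition hull_act_fun g (f : Y) y := sval f (a (monoid.inv g) y).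

Lemma in_rho_hull_act g f : in_rho_hull X0 rho (hull_act_fun g f).
Proof.
case: f => f [f0 fa]; split => [y nXy|e e0]; rewrite /hull_act_fun /=.
  by apply: f0 => /(G_invariant_setV act1 actM X0_invariant); exact: nXy.
have [x Xx fx] := fa e e0; exists (a g x); first exact: X0_invariant.
move=> y Xy; rewrite -[in rho _ y](actVK act1 actM g y) rho_invariant.
exact/fx/X0_invariant.
Qed.

Definition hull_act g f : Y := exist _ _ (in_rho_hull_act g f).

Lemma hull_act_ball g f h e : ball f e h -> ball (hull_act g f) e (hull_act g h).
Proof. by move=> [d de fh]; exists d => // y; exact: fh. Qed.

Lemma hull_homeo_action : homeo_action hull_act.
Proof.
split=> [f|g h f|g f B /nbhs_ballP [e e0 eB]]; first 2 last.
- by apply/nbhs_ballP; exists e => // h /(hull_act_ball g); exact: eB.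
- by apply: hull_ext => y; rewrite /= /hull_act_fun monoid.invg1 act1.
- by apply: hull_ext => y; rewrite /= /hull_act_fun monoid.invgM actM.
Qed.

Lemma hull_equicontinuous : equicontinuous_system hull_act.
Proof. by move=> e e0; exists e => // g f h; exact: hull_act_ball. Qed.

Section HullProjection.
Variable x0 : X.
Hypothesis X0x0 : X0 x0.

(* Only the values on X0 matter; elsewhere [hull_proj] is the image of [x0]. *)
Definition hull_proj x : Y :=
  if pselect (X0 x) is left Xx then exist _ _ (in_rho_hull_rho_on rho Xx)
  else exist _ _ (in_rho_hull_rho_on rho X0x0).

Lemma hull_projE x : X0 x -> sval (hull_proj x) = rho_on X0 rho x.
Proof. by rewrite /hull_proj; case: pselect. Qed.

Lemma hull_proj_equivariant g x : X0 x -> hull_proj (a g x) = hull_act g (hull_proj x).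
Proof.
move=> Xx; apply: hull_ext => y; rewrite /= /hull_act_fun !hull_projE //; last first.
  exact: X0_invariant.
have [Xy|nXy] := pselect (X0 y).
  rewrite !rho_onE //; last exact: X0_invariant.
  by rewrite -[in rho _ y](actVK act1 actM g y) rho_invariant.
by rewrite !rho_on_out // => /(G_invariant_setV act1 actM X0_invariant).
Qed.

Lemma hull_proj_ball x x' e : X0 x -> X0 x' -> rho x x' < e ->
  ball (hull_proj x) e (hull_proj x').
Proof.
move=> Xx Xx' xx'; exists (rho x x') => // y; rewrite !hull_projE //.
have [Xy|nXy] := pselect (X0 y); last by rewrite !rho_on_out // subrr normr0 rho_ge0.
by rewrite !rho_onE //; exact: (rho_lipschitz rhoC rho_triangle).
Qed.

Lemma hull_approx (f : Y) e : 0 < e -> exists2 x, X0 x & ball f e (hull_proj x).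
Proof.
move=> e0; have e20 : 0 < e / 2 by rewrite divr_gt0.
have [x Xx fx] := hull_close_rho_on f e20; exists x => //.
by exists (e / 2); [lra | move=> y; rewrite hull_projE].
Qed.

Lemma hull_minimal : minimal_system hull_act.
Proof.
move=> f; apply/seteqP; split => // p _ B /nbhs_ballP [e e0 eB].
have e40 : 0 < e / 4 by rewrite divr_gt0.
have [x Xx fx] := hull_approx f e40; have [x' Xx' px'] := hull_approx p e40.
have [g x'gx] := rho_orbit_dense Xx Xx' e40.
exists (hull_act g f); split; first by exists g.
apply: eB; apply: (@le_ball _ _ _ (e / 4 + e / 4 + e / 4)); first lra.
apply: ball_triangle (ball_sym (hull_act_ball g fx)).
rewrite -hull_proj_equivariant //.
exact: ball_triangle px' (hull_proj_ball Xx' (X0_invariant _ Xx) x'gx).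
Qed.

Lemma hull_proj_continuous : {within X0, continuous hull_proj}.
Proof.
apply/subspace_continuousP => x Xx; apply/cvg_ballP => e e0.
have e20 : 0 < e / 2 by rewrite divr_gt0.
apply: filterS (rho_continuous Xx e20) => y xy Xy.
by apply: hull_proj_ball => //; apply: le_lt_trans (xy Xy) _; lra.
Qed.

End HullProjection.

Lemma S0eq_rho_eq0 p : S0eq R a X0 p -> rho p.1 p.2 = 0.
Proof.
move=> [Xp1 [Xp2 S0p]].
have [_ [_]] := S0p Y hull_act (hull_proj Xp1) (@hull_hausdorff _ _ X0 rho)
  (hull_compact rhoC rho_triangle rho_totally_bounded) hull_homeo_action
  (@hull_minimal _ Xp1) hull_equicontinuous (@hull_proj_continuous _ Xp1)
  (@hull_proj_equivariant _ Xp1).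
move=> /(congr1 (fun f : Y => sval f p.2)).
by rewrite !hull_projE // !rho_onE // rhoxx.
Qed.

End HullDynamics.

(** * Probability measures in real numbers *)

Section ProbabilityMeasureReal.
Context d (T : measurableType d) (R : realType) (mu : {measure set T -> \bar R}).
Hypothesis muT : mu [set: T] = 1%E.

Definition mes (A : set T) : R := fine (mu A).

Lemma mes_ge0 A : 0 <= mes A.
Proof. by rewrite fine_ge0 // measure_ge0. Qed.

Lemma mesE A : measurable A -> mu A = (mes A)%:E.
Proof.
move=> mA; rewrite fineK // ge0_fin_numE ?measure_ge0 //.
have muT_fin : (mu [set: T] < +oo)%E by rewrite muT ltry.
by apply: le_lt_trans muT_fin; rewrite le_measure ?inE.
Qed.

Lemma mes0 : mes set0 = 0.
Proof. by rewrite /mes measure0. Qed.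

Lemma le_mes A B : measurable A -> measurable B -> A `<=` B -> mes A <= mes B.
Proof. by move=> mA mB AB; rewrite -lee_fin -!mesE // le_measure ?inE. Qed.

Lemma mes_le1 A : measurable A -> mes A <= 1.
Proof.
move=> mA; have := le_mes mA measurableT (subsetT A).
by rewrite /mes [in X in _ <= X]muT.
Qed.

Lemma mesU2 A B : measurable A -> measurable B -> mes (A `|` B) <= mes A + mes B.
Proof.
move=> mA mB; rewrite -lee_fin EFinD -!mesE //; last exact: measurableU.
exact: measureU2.
Qed.

Lemma mesU A B : measurable A -> measurable B -> A `&` B = set0 ->
  mes (A `|` B) = mes A + mes B.
Proof.
move=> mA mB AB; apply/EFin_inj; rewrite EFinD -!mesE //; last exact: measurableU.
exact: measureU.
Qed.

Lemma mesDI A B : measurable A -> measurable B -> mes A = mes (A `\` B) + mes (A `&` B).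
Proof.
move=> mA mB; apply/EFin_inj; rewrite EFinD -!mesE //.
- exact: measureDI.
- exact: measurableI.
- exact: measurableD.
Qed.

(* A maximal family of pairwise disjoint sets among the [A i] has at most
   [1 / c] members, and every [A i] meets its union. *)
Lemma equal_mes_saturating_family (I : Type) (A : I -> set T) c :
  0 < c -> (forall i, measurable (A i)) -> (forall i, mes (A i) = c) ->
  exists s : seq I, forall i, A i `&` \big[setU/set0]_(j <- s) A j !=set0.
Proof.
move=> c0 mA mAc; have mUA s : measurable (\big[setU/set0]_(j <- s) A j).
  exact: bigsetU_measurable.
pose P n := `[< exists s, size s = n /\ mes (\big[setU/set0]_(j <- s) A j) = n%:R * c >].
have P0 : exists n, P n.
  by exists 0%N; apply/asboolP; exists [::]; rewrite big_nil mes0 mul0r.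
have Pbound n : P n -> (n <= Num.truncn c^-1)%N.
  move=> /asboolP [s [<- sc]]; rewrite truncn_ge_nat; last by rewrite invr_ge0 ltW.
  by rewrite -[c^-1]mul1r ler_pdivlMr // -sc mes_le1.
have [K /asboolP [s [sK sc]] Kmax] := ex_maxnP P0 Pbound.
exists s => i; apply/set0P/negP => /eqP disjoint_i.
have /Kmax : P K.+1.
  apply/asboolP; exists (i :: s); split; first by rewrite /= sK.
  by rewrite big_cons mesU // sc mAc -nat1r mulrDl mul1r.
by rewrite ltnn.
Qed.

End ProbabilityMeasureReal.

Section SupportPoint.
Variables (R : realType) (X : pseudoPMetricType R).

Lemma ball_sub_interior (x : X) r : 0 < r -> ball x (r / 2) `<=` (ball x r)°.
Proof.
move=> r0 y xy; apply/nbhs_ballP; exists (r / 2); first by rewrite /= divr_gt0.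
by move=> z yz; exact: ball_split xy yz.
Qed.

Hypothesis X_compact : compact [set: X].

Lemma interior_ball_cover e : 0 < e ->
  exists s : seq X, forall z, exists2 q, q \in s & (ball q e)° z.
Proof.
move=> e0; move: X_compact; rewrite compact_cover.
case/(_ X setT (fun q => (ball q e)°)) => [q _|z _|D _ DX].
- exact: open_interior.
- by exists z => //; apply: ball_sub_interior => //; apply: ballxx; rewrite divr_gt0.
- by exists (finmap.enum_fset D) => z; have [q Dq qz] := DX z I; exists q.
Qed.

Lemma measure_support_point (mu : measure (borel_type X) R) (A : set X) :
  measurable (A : set (borel_type X)) -> mu A != 0%E ->
  exists2 x, A x & forall r, 0 < r -> (0 < mu (ball x r)°)%E.
Proof.
move=> mA muA0.
have cover_n n : exists s : seq X, forall z,
    exists2 q, q \in s & (ball q n.+1%:R^-1)° z.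
  by apply: interior_ball_cover; rewrite invr_gt0.
have [cover coverP] := choice cover_n.
pose B n q : set X := (ball q n.+1%:R^-1)°.
have mB n q : measurable (B n q : set (borel_type X)).
  by apply: open_borel; exact: open_interior.
pose Z := \bigcup_n \big[setU/set0]_(q <- cover n | mu (B n q) == 0%E) B n q.
have Z0 : mu.-negligible (Z : set (borel_type X)).
  apply: negligible_bigcup => n; elim/big_ind: _ => //.
  - exact: negligible_set0.
  - by move=> U V; exact: (@negligibleU _ (borel_type X)).
  - by move=> q /eqP Bq0; apply/negligibleP.
have [x Ax nZx] : exists2 x, A x & ~ Z x.
  apply: contrapT => AZ; move/negP: muA0; apply; apply/eqP/negligibleP => //.
  by apply: negligibleS Z0 => z Az; apply: contrapT => nZz; apply: AZ; exists z.
exists x => // r r0; rewrite lt0e measure_ge0 andbT; apply/negP => /eqP mu0.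
have r40 : 0 < r / 4 by rewrite divr_gt0.
have [n nr] := exists_natSinv_lt r40; have [q qn xq] := coverP n x.
have Bsub : B n q `<=` (ball x r)°.
  move=> y /interior_subset qy; apply: ball_sub_interior => //.
  have := ball_triangle (ball_sym (interior_subset xq)) qy.
  by apply: le_ball; apply: le_trans (lerD (ltW nr) (ltW nr)) _; lra.
apply: nZx; exists n => //; rewrite (big_rem _ qn) /=.
suff -> : mu (B n q) == 0%E by left.
rewrite -measure_le0 -mu0 le_measure ?inE //.
by apply: open_borel; exact: open_interior.
Qed.

End SupportPoint.

(** * The pseudometric d_N *)

Section SectionDistance.
Variables (R : realType) (G : groupType) (X : pseudoPMetricType R).
Variables (a : G -> X -> X) (X0 : set X) (lam : measure (borel_type X) R).
Variable N : set (X * X).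
Hypothesis act : homeo_action a.
Hypothesis lamT : lam [set: borel_type X] = 1%E.
Hypothesis lam_invariant : forall g (A : set (borel_type X)),
  measurable A -> lam (a g @^-1` A) = lam A.
Hypothesis N_calN : in_calN a N.

Let act1 : forall x, a monoid.one x = x. Proof. by case: act. Qed.
Let actM : forall g h x, a (monoid.mul g h) x = a g (a h x). Proof. by case: act. Qed.

Local Notation S := (section N).
Local Notation m := (mes lam).

(* [d_N] read in [R]; [lam] is a probability, so nothing is lost. *)
Definition dN x y := m (symdiff (S x) (S y)).

Lemma section_measurable x : measurable (S x : set (borel_type X)).
Proof. by apply: closed_borel; apply: closed_section; case: N_calN. Qed.

Let mSS x y : measurable (symdiff (S x) (S y) : set (borel_type X)).
Proof. by apply: symdiff_measurable; exact: section_measurable. Qed.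

Lemma dNxx x : dN x x = 0.
Proof. by rewrite /dN /symdiff setDv setU0 mes0. Qed.

Lemma dNC x y : dN x y = dN y x.
Proof. by rewrite /dN /symdiff setUC. Qed.

Lemma dN_triangle x y z : dN x z <= dN x y + dN y z.
Proof.
apply: le_trans (mesU2 lamT (mSS _ _) (mSS _ _)).
apply: (le_mes lamT (mSS _ _)); first exact: measurableU.
move=> w [[Sxw nSzw]|[Szw nSxw]]; have [Syw|nSyw] := pselect (S y w).
- by right; left.
- by left; left.
- by left; right.
- by right; right.
Qed.

Lemma section_act g x : S (a g x) = a (monoid.inv g) @^-1` S x.
Proof.
case: N_calN => _ Ninv; apply/seteqP; split => z /= Nz.
  by have := Ninv (monoid.inv g) _ _ Nz; rewrite actK.
by have := Ninv g _ _ Nz; rewrite actVK.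
Qed.

Lemma mes_invariant g (A : set (borel_type X)) :
  measurable A -> m (a g @^-1` A) = m A.
Proof. by move=> mA; rewrite /mes lam_invariant. Qed.

Lemma dN_invariant g x y : dN (a g x) (a g y) = dN x y.
Proof. by rewrite /dN !section_act -(mes_invariant (monoid.inv g) (mSS x y)). Qed.

Lemma mes_section_invariant g x : m (S (a g x)) = m (S x).
Proof. by rewrite section_act mes_invariant //; exact: section_measurable. Qed.

Definition section_near x r := closure [set z | exists2 y, ball x r y & N (y, z)].

Lemma bigcap_section_near x : \bigcap_k section_near x k.+1%:R^-1 `<=` S x.
Proof.
case: N_calN => cN _ z near_z; rewrite /section /= ((closure_id N).1 cN).
move=> B /nbhs_ballP [d d0 dB]; have [k kd] := exists_natSinv_lt d0.
have [w [[y xy Nyw] zw]] := near_z k I _ (nbhsx_ballx z d d0).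
exists (y, w); split => //; apply: dB; split => //=.
by move: xy; apply: le_ball; exact: ltW.
Qed.

(* Continuity from above of [lam] along the closed sets [section_near x r],
   which shrink to [S x] because [N] is closed. *)
Lemma mes_sectionD_usc x e : 0 < e -> \forall y \near x, m (S y `\` S x) <= e.
Proof.
move=> e0; pose C k := section_near x k.+1%:R^-1 `\` S x.
have mC k : measurable (C k : set (borel_type X)).
  apply: measurableD; last exact: section_measurable.
  by apply: closed_borel; exact: closed_closure.
have C_nonincr : nonincreasing_seq C.
  move=> i j ij; apply/subsetPset => z [near_z nSz]; split => //; move: near_z.
  apply: closureS => w [y xy Nyw]; exists y => //; move: xy; apply: le_ball.
  by rewrite lef_pV2 ?posrE // ler_nat.
have C0 : \bigcap_k C k = set0.
  apply/seteqP; split => // z Cz; have [_] := Cz 0%N I; apply.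
  by apply: bigcap_section_near => k _; have [] := Cz k I.
have : (lam \o C) k @[k --> \oo] --> 0%E.
  rewrite -(measure0 lam) -C0; apply: nonincreasing_cvg_mu => //.
  - by rewrite mesE ?ltry.
  - by rewrite C0.
move=> /fine_cvg /(cvgr0_norm_lt _) /(_ e e0) [k _ /(_ k (leqnn k))] /=.
rewrite ger0_norm ?mes_ge0 // => /ltW Cke.
apply/nbhs_ballP; exists k.+1%:R^-1; first by rewrite /= invr_gt0.
move=> y xy; apply: le_trans Cke; apply: (le_mes lamT _ (mC k)).
  by apply: measurableD; exact: section_measurable.
by move=> z [Syz nSxz]; split => //; apply: subset_closure; exists y.
Qed.

Hypothesis X0_transitive : X0 `<=` transitive_points a.

Lemma mes_section_le x x' : X0 x -> X0 x' -> m (S x) <= m (S x').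
Proof.
move=> Xx Xx'; apply/ler_addgt0Pr => e e0.
have /(transitive_point_visits (X0_transitive Xx)) [g x'gx] := mes_sectionD_usc x' e0.
have mSD : measurable (S (a g x) `\` S x' : set (borel_type X)).
  by apply: measurableD; exact: section_measurable.
rewrite -(mes_section_invariant g) addrC.
apply: (@le_trans _ _ (m (S (a g x) `\` S x') + m (S x'))); last by rewrite lerD2r.
apply: le_trans (mesU2 lamT mSD (section_measurable x')).
apply: (le_mes lamT _ (measurableU _ _ mSD (section_measurable x'))).
  exact: section_measurable.
by move=> z Sz; have [Sx'z|nSx'z] := pselect (S x' z); [right|left; split].
Qed.

Lemma mes_section_const x x' : X0 x -> X0 x' -> m (S x) = m (S x').
Proof. by move=> Xx Xx'; apply/le_anti; rewrite !mes_section_le. Qed.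

(* Both halves of the symmetric difference have the same measure because
   [m (S x)] does not depend on [x]. *)
Lemma dN_double x y : X0 x -> X0 y -> dN x y = 2 * m (S y `\` S x).
Proof.
move=> Xx Xy; have mS := section_measurable.
have mSD u v : measurable (S u `\` S v : set (borel_type X)).
  by apply: measurableD; exact: mS.
have halves : dN x y = m (S x `\` S y) + m (S y `\` S x).
  apply: (mesU lamT (mSD x y) (mSD y x)).
  by apply/seteqP; split => // z [[? ?] [? ?]].
have := mes_section_const Xx Xy.
rewrite (mesDI lamT (mS x) (mS y)) (mesDI lamT (mS y) (mS x)) setIC halves; lra.
Qed.

Lemma dN_continuous x : X0 x -> forall e, 0 < e ->
  \forall y \near x, X0 y -> dN x y <= e.
Proof.
move=> Xx e e0; have e20 : 0 < e / 2 by rewrite divr_gt0.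
by apply: filterS (mes_sectionD_usc x e20) => y xy Xy; rewrite dN_double //; lra.
Qed.

Hypothesis X0_invariant : G_invariant_set a X0.

Lemma dN_orbit_dense x x' : X0 x -> X0 x' -> forall e, 0 < e ->
  exists g, dN x' (a g x) < e.
Proof.
move=> Xx Xx' e e0; have e20 : 0 < e / 2 by rewrite divr_gt0.
have [g x'gx] := transitive_point_visits (X0_transitive Xx) (dN_continuous Xx' e20).
by exists g; apply: le_lt_trans (x'gx (X0_invariant _ Xx)) _; lra.
Qed.

Hypothesis X_compact : compact [set: X].
Hypothesis X0_dense : dense X0.
Hypothesis X0_measurable : measurable (X0 : set (borel_type X)).
Hypothesis lamX0 : lam X0 = 1%E.

(* Translates of a small ball around a support point have equal positive
   measure, so finitely many of them meet every translate; their centres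
   form the net. *)
Lemma dN_totally_bounded e : 0 < e ->
  exists s : seq X, forall x, X0 x -> exists2 q, q \in s & dN x q <= e.
Proof.
move=> e0; have e30 : 0 < e / 3 by rewrite divr_gt0.
have lamX0_neq0 : lam X0 != 0%E by rewrite lamX0.
have [x0 Xx0 x0_supp] := measure_support_point X_compact X0_measurable lamX0_neq0.
have [r r0 x0r] : exists2 r, 0 < r & forall y, ball x0 r y -> X0 y -> dN x0 y <= e / 3.
  by apply/nbhs_ballP; exact: dN_continuous.
pose U := (ball x0 r)°; pose T h := a (monoid.inv h) @^-1` U.
have oT h : open (T h).
  by apply: open_comp; [move=> z _; case: act => _ _; apply|exact: open_interior].
have mT h : measurable (T h : set (borel_type X)) by exact: open_borel.
have T_close h z : T h z -> X0 z -> dN (a h x0) z <= e / 3.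
  move=> Tz Xz; rewrite -(actVK act1 actM h z) dN_invariant.
  by apply: x0r; [exact: interior_subset | exact: X0_invariant].
have mU : measurable (U : set (borel_type X)).
  by apply: open_borel; exact: open_interior.
have mU_gt0 : 0 < m U by rewrite -lte_fin -mesE // x0_supp.
have mTU h : m (T h) = m U by rewrite mes_invariant.
have [gs gs_sat] := equal_mes_saturating_family lamT mU_gt0 mT mTU.
exists [seq a g x0 | g <- gs] => x Xx.
have [g Tgx] : exists g, T g x.
  have Ux0 : nbhs x0 U.
    by apply: open_nbhs_nbhs; split; [exact: open_interior|exact: nbhsx_ballx].
  have [g Ugx] := transitive_point_visits (X0_transitive Xx) Ux0.
  by exists (monoid.inv g); rewrite /T monoid.invgK.
have [w [[Tgw gsw] Xw]] : (T g `&` \big[setU/set0]_(j <- gs) T j) `&` X0 !=set0.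
  apply: X0_dense; first exact: gs_sat.
  by apply: openI (oT g) _; elim/big_ind: _ => //; [exact: open0|exact: openU].
have [h hgs Thw] := bigsetU_seqP gsw.
exists (a h x0); first exact: map_f.
have := T_close g x Tgx Xx; have := T_close g w Tgw Xw; have := T_close h w Thw Xw.
have := dN_triangle x (a g x0) w; have := dN_triangle x w (a h x0).
rewrite [dN x (a g x0)]dNC [dN w (a h x0)]dNC; lra.
Qed.

Lemma S0eq_dN_eq0 p : S0eq R a X0 p -> dN p.1 p.2 = 0.
Proof.
exact: (S0eq_rho_eq0 act1 actM X0_invariant dNxx dNC dN_triangle
  dN_totally_bounded dN_invariant dN_continuous dN_orbit_dense).
Qed.

End SectionDistance.

Local Open Scope ereal_scope.

Theorem mainTheorem7 (R : realType) (G : groupType) (X : pseudoPMetricType R)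
  (a : G -> X -> X) (X0 : set X)
  (lam : measure (borel_type X) R) :
  hausdorff_space X -> compact [set: X] ->
  homeo_action a -> top_transitive a ->
  X0 `<=` transitive_points a -> dense X0 -> G_invariant_set a X0 ->
  lam [set: borel_type X] = 1 ->
  (forall g (A : set (borel_type X)), measurable A -> lam (a g @^-1` A) = lam A) ->
  measurable (X0 : set (borel_type X)) -> lam X0 = 1 ->
  S0eq R a X0 `<=` \bigcap_(N in in_calN a) K0 lam X0 N.
Proof.
move=> _ X_compact act _ X0_transitive X0_dense X0_invariant lamT lam_invariant
  X0_measurable lamX0 p S0p N N_calN.
have [Xp1 [Xp2 _]] := S0p; split => //; split => //.
have mS x : measurable (section N x : set (borel_type X)).
  exact: section_measurable N_calN x.
rewrite /d_N (mesE lamT); last exact: symdiff_measurable.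
rewrite -[mes _ _]/(dN lam N p.1 p.2).
by rewrite (S0eq_dN_eq0 act lamT lam_invariant N_calN X0_transitive
  X0_invariant X_compact X0_dense X0_measurable lamX0 S0p).
Qed.
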